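(* Let $m\ge2$ and let $\mathbb N$ be the directed cycle $1\to2\to\cdots\to m\to1$, the arc from $i-1$ to $i$ (vertex $0$ being vertex $m$) carrying a real matrix $C_i$ with $n$ columns. There exist matrices $C_1,\dots,C_m$ with $\ker C_i\neq 0$ for all $i$ such that $\bar{\mathbb N}$ is well-configured (i.e. $C_ix_i=C_ix_{i-1}$ for all $i$, with $x_0:=x_m$, implies $x_1=\cdots=x_m$ for all $x_1,\dots,x_m\in\mathbb R^n$) if and only if $m\le n$.
   Context: $\bar{\mathbb N}$ denotes the graph $\mathbb N$ together with the matrices assigned to its arcs; well-configuredness is as described in the claim. *)

From HB Require Import structures.
From mathcomp Require Import all_boot all_order all_algebra.
From mathcomp Require Import all_classical all_reals.
Set Implicit Arguments. Unset Strict Implicit. Unset Printing Implicit Defensive.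
Import GRing.Theory Num.Theory.
Local Open Scope ring_scope.

(* Vertices of the directed cycle N are 'I_m (vertex k+1 of the paper is k).
   The arc into vertex i comes from its cyclic predecessor ord_pred i
   (the paper's i-1, with vertex 0 := vertex m) and carries C i,
   a real matrix with r i rows and n columns. *)

Definition nontrivial_kernel (R : ringType) (p n : nat) (C : 'M[R]_(p, n)) : Prop :=
  exists v : 'cV[R]_n, v != 0 /\ C *m v = 0.

Definition well_configured (R : ringType) (m n : nat) (r : 'I_m -> nat)
  (C : forall i : 'I_m, 'M[R]_(r i, n)) : Prop :=
  forall x : 'I_m -> 'cV[R]_n,
    (forall i : 'I_m, C i *m x i = C i *m x (ord_pred i)) ->
    forall i j : 'I_m, x i = x j.

From HB Require Import structures.
From mathcomp Require Import all_boot all_order all_algebra.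
From mathcomp Require Import all_classical all_reals.
From mathcomp Require Import zify.
Set Implicit Arguments.
Unset Strict Implicit.
Unset Printing Implicit Defensive.
Import GRing.Theory Num.Theory.
Local Open Scope ring_scope.

(* If ker C_i contains v_i <> 0 and c_1 v_1 + ... + c_m v_m = 0, the partial
   sums x_k = c_1 v_1 + ... + c_k v_k satisfy x_k - x_{k-1} = c_k v_k (also
   for k = 1, as x_m = 0), so C_k x_k = C_k x_{k-1}; well-configuredness makes
   the x_k equal, whence every c_k v_k = 0: the v_i are linearly independent
   and m <= n.  Conversely, for m <= n let C_i be the coordinate projection
   killing only the i-th coordinate.  Then x_i - x_{i-1} is supported on
   coordinate i, so along the cycle the a-th coordinate of x can only change
   on the arc into vertex a; since the changes around the cycle sum to zero,
   it does not change at all. *)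

Section Cycle.

Variable m : nat.

Lemma ord_pred_pos (i : 'I_m) : (0 < i)%N -> ord_pred i = i.-1 :> nat.
Proof.
move=> i_gt0 /=; have lt_im := ltn_ord i.
have -> : ((i + m).-1 = i.-1 + m)%N by lia.
by rewrite modnDr modn_small //; lia.
Qed.

Lemma ord_pred0 (i : 'I_m) : i = 0%N :> nat -> ord_pred i = m.-1 :> nat.
Proof.
by move=> /= ->; rewrite add0n modn_small //; have := ltn_ord i; lia.
Qed.

Lemma cycle_constant (T : Type) (f : 'I_m -> T) :
  (forall i, f i = f (ord_pred i)) -> forall i j, f i = f j.
Proof.
move=> f_pred.
have f_eq0 (i j : 'I_m) : j = 0%N :> nat -> f i = f j.
  move=> j0; case: i => k; elim: k => [|k IHk] lt_km.
    by congr f; apply: val_inj => /=; rewrite j0.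
  rewrite f_pred -(IHk (ltnW lt_km)); congr f; apply: val_inj.
  exact: ord_pred_pos.
move=> i j; have m_gt0 : (0 < m)%N by have := ltn_ord i; lia.
by rewrite (f_eq0 i (Ordinal m_gt0)) // (f_eq0 j (Ordinal m_gt0)).
Qed.

Lemma sum_cycle_diff (V : zmodType) (f : 'I_m -> V) :
  \sum_i (f i - f (ord_pred i)) = 0.
Proof. by rewrite sumrB (reindex_inj (@ord_pred_inj m)) subrr. Qed.

Lemma cycle_diff_last (V : zmodType) (f : 'I_m -> V) (k : 'I_m) :
  (forall i, i != k -> f i = f (ord_pred i)) -> f k = f (ord_pred k).
Proof.
move=> f_pred; apply/eqP; rewrite -subr_eq0.
rewrite -(sum_cycle_diff f) (bigD1 k) //= big1 ?addr0 // => i i_neq_k.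
by rewrite f_pred // subrr.
Qed.

Lemma cycle_partial_sum_diff (V : zmodType) (f : 'I_m -> V) (k : 'I_m) :
  \sum_i f i = 0 ->
  \sum_(j : 'I_m | (j <= k)%N) f j
    - \sum_(j : 'I_m | (j <= ord_pred k)%N) f j = f k.
Proof.
move=> sum_f0; have [k0 | k_gt0] := eqVneq (k : nat) 0%N.
  rewrite (eq_bigl (pred1 k)) => [|j]; last by rewrite /= -val_eqE /= k0; lia.
  rewrite big_pred1_eq (eq_bigl predT) ?sum_f0 ?subr0 // => j.
  by rewrite ord_pred0 //=; have := ltn_ord j; lia.
rewrite (bigD1 k) //= (eq_bigl (fun j : 'I_m => (j <= ord_pred k)%N)) ?addrK //.
move=> j; rewrite ord_pred_pos ?lt0n // -val_eqE /=; lia.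
Qed.

End Cycle.

Definition coord_compl_mx {R : nzRingType} n (j : 'I_n) : 'M[R]_n :=
  diag_mx (\row_a (a != j)%:R).

Lemma coord_compl_mxE (R : nzRingType) n (j : 'I_n) (v : 'cV[R]_n) a :
  (coord_compl_mx j *m v) a 0 = (a != j)%:R * v a 0.
Proof. by rewrite mul_diag_mx !mxE. Qed.

Lemma nontrivial_kernel_coord_compl (R : nzRingType) n (j : 'I_n) :
  nontrivial_kernel (coord_compl_mx (R := R) j).
Proof.
exists (delta_mx j 0); split.
  by apply/eqP => /matrixP /(_ j 0); rewrite !mxE eqxx; apply/eqP/oner_neq0.
apply/matrixP => a b; rewrite (ord1 b) coord_compl_mxE !mxE.
by case: (a == j); rewrite ?mulr0 ?mul0r.
Qed.

Lemma well_configured_coord_compl (R : nzRingType) m n (sigma : 'I_m -> 'I_n) :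
  injective sigma ->
  well_configured (fun i => coord_compl_mx (R := R) (sigma i)).
Proof.
move=> sigma_inj x Cx i j; apply/matrixP => a b; rewrite (ord1 b).
have step k : a != sigma k -> x k a 0 = x (ord_pred k) a 0.
  move=> a_neq; have /matrixP /(_ a 0) := Cx k.
  by rewrite !coord_compl_mxE a_neq !mul1r.
apply: (cycle_constant (f := fun k => x k a 0)) => k.
have [a_eq|] := eqVneq a (sigma k); last exact: step.
apply: (cycle_diff_last (f := fun k => x k a 0)) => l l_neq_k; apply: step.
by rewrite a_eq (inj_eq sigma_inj) eq_sym.
Qed.

Lemma well_configured_kernel_free (R : fieldType) m n (r : 'I_m -> nat)
    (C : forall i : 'I_m, 'M[R]_(r i, n)) (v : 'I_m -> 'cV[R]_n) :
  well_configured C -> (forall i, v i != 0) -> (forall i, C i *m v i = 0) ->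
  free [tuple v i | i < m].
Proof.
move=> wcC v_neq0 Cv0; apply/freeP => c; under eq_bigr do rewrite nth_mktuple.
move=> sum_cv0 k; pose x (l : 'I_m) := \sum_(j : 'I_m | (j <= l)%N) c j *: v j.
have x_diff l : x l - x (ord_pred l) = c l *: v l.
  exact: cycle_partial_sum_diff.
have x_pred : x k = x (ord_pred k).
  apply: wcC => l; apply/eqP; rewrite -subr_eq0 -mulmxBr x_diff.
  by rewrite -scalemxAr Cv0 scaler0.
move/eqP: x_pred; rewrite -subr_eq0 x_diff scaler_eq0 (negbTE (v_neq0 k)).
by rewrite orbF => /eqP.
Qed.

Lemma free_size_leq_dim (K : fieldType) (vT : vectType K) (X : seq vT) :
  free X -> (size X <= dim vT)%N.
Proof. by move=> /eqP <-; rewrite -dimvf dimvS ?subvf. Qed.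

Theorem corollary1 (R : realType) (m n : nat) (hm : (2 <= m)%N) :
  (exists (r : 'I_m -> nat) (C : forall i : 'I_m, 'M[R]_(r i, n)),
      (forall i : 'I_m, nontrivial_kernel (C i)) /\ well_configured C)
  <-> (m <= n)%N.
Proof.
split=> [[r [C [kerC wcC]]] | le_mn].
  have [v /all_and2 [v_neq0 Cv0]] := fin_all_exists kerC.
  have := free_size_leq_dim (well_configured_kernel_free wcC v_neq0 Cv0).
  by rewrite size_tuple dim_matrix mulr1.
exists (fun=> n), (fun i => coord_compl_mx (widen_ord le_mn i)); split.
  by move=> i; exact: nontrivial_kernel_coord_compl.
by apply: well_configured_coord_compl => i j /(congr1 val) /= /val_inj.
Qed.
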